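(* Let $N>0$, $m>0$, $F>0$, $\alpha>0$, $w>0$, $\tau\in(0,1)$, $g\geq 0$, $L_g\geq 0$, and define \[ L=\frac{N\left[(1-\tau)(mL_g+\alpha F)+(mg+F)mN\right]}{\alpha+(Nm-\alpha)\tau},\qquad q=\frac{(1-\tau)(L+L_g-\alpha g)}{\left(Nm+\alpha(1-\tau)\right)(L+L_g)}, \] \[ p=\frac{L+L_g}{L+L_g-\alpha g}\left(mw+\frac{\alpha(1-\tau)w}{N}\right). \] If $Nm>\alpha$, then $p-mw>0$.
   Context: These are the symmetric-equilibrium quantities of a monopolistic-competition general equilibrium model: $N$ is the measure of firms, $m$ and $F$ the marginal and fixed labor inputs, $\alpha$ the CARA utility parameter, $w$ the nominal wage, $\tau$ the income tax rate, $g$ the government purchase of each variety, $L_g$ government employment, $L$ private employment, $q$ per-capita consumption of each variety, $p$ the common price (so $mw$ is marginal cost). *)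

From Stdlib Require Import Reals Lra.
Open Scope R_scope.

Definition L_eq (N m F alpha tau g Lg : R) : R :=
  N * ((1 - tau) * (m * Lg + alpha * F) + (m * g + F) * m * N)
  / (alpha + (N * m - alpha) * tau).

Definition q_eq (N m F alpha tau g Lg : R) : R :=
  let L := L_eq N m F alpha tau g Lg in
  (1 - tau) * (L + Lg - alpha * g) / ((N * m + alpha * (1 - tau)) * (L + Lg)).

Definition p_eq (N m F alpha w tau g Lg : R) : R :=
  let L := L_eq N m F alpha tau g Lg in
  (L + Lg) / (L + Lg - alpha * g) * (m * w + alpha * (1 - tau) * w / N).

(** The markup factor (L + Lg)/(L + Lg - alpha g) is at least 1 as soon as
    its denominator is positive, and mw + alpha (1 - tau) w / N exceeds mw, so
    p > mw.  Positivity of the denominator, i.e. L > alpha g, holds because the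
    tax-weighted denominator alpha + (N m - alpha) tau of L is a convex
    combination of alpha and N m, hence at most N m, while the numerator of L
    contains the term (N m)^2 g. *)

From Stdlib Require Import Reals Lra Psatz.
Open Scope R_scope.

Lemma convex_comb_bounds (a b t : R) :
  0 < a -> a < b -> 0 < t < 1 -> 0 < a + (b - a) * t <= b.
Proof. intros ha hab ht; split; nra. Qed.

Lemma alpha_g_lt_L_eq (N m F alpha tau g Lg : R) :
  0 < N -> 0 < m -> 0 < F -> 0 < alpha -> 0 < tau < 1 -> 0 <= g -> 0 <= Lg ->
  alpha < N * m -> alpha * g < L_eq N m F alpha tau g Lg.
Proof.
  intros hN hm hF halpha htau hg hLg hNm.
  destruct (convex_comb_bounds alpha (N * m) tau) as [hD hDle]; auto.
  unfold L_eq; set (D := alpha + (N * m - alpha) * tau) in *.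
  apply Rmult_lt_reg_r with D; [exact hD|].
  unfold Rdiv; rewrite (Rmult_assoc _ (/ D)), Rinv_l, Rmult_1_r by lra.
  assert (hgD : alpha * g * D <= N * m * g * (N * m)).
  { apply Rle_trans with (alpha * g * (N * m)).
    - apply Rmult_le_compat_l; [apply Rmult_le_pos|]; lra.
    - apply Rmult_le_compat_r; [|apply Rmult_le_compat_r]; lra. }
  assert (0 < N * N * m * F) by (repeat apply Rmult_lt_0_compat; lra).
  assert (0 <= N * (1 - tau) * (m * Lg + alpha * F)).
  { apply Rmult_le_pos; [nra|]. nra. }
  nra.
Qed.

Lemma le_ratio_mul (a b c : R) : 0 < b -> b <= a -> 0 <= c -> c <= a / b * c.
Proof.
  intros hb hba hc.
  assert (1 <= a / b) by (apply Rmult_le_reg_r with b; [lra|];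
    unfold Rdiv; rewrite (Rmult_assoc a), Rinv_l by lra; lra).
  nra.
Qed.

Theorem proposition3 (N m F alpha w tau g Lg : R)
  (hN : 0 < N) (hm : 0 < m) (hF : 0 < F) (halpha : 0 < alpha) (hw : 0 < w)
  (htau0 : 0 < tau) (htau1 : tau < 1) (hg : 0 <= g) (hLg : 0 <= Lg)
  (hNm : N * m > alpha) :
  p_eq N m F alpha w tau g Lg - m * w > 0.
Proof.
  unfold p_eq; set (L := L_eq N m F alpha tau g Lg).
  assert (hL : alpha * g < L) by (apply alpha_g_lt_L_eq; auto; lra).
  assert (hmarkup : 0 < alpha * (1 - tau) * w / N).
  { apply Rdiv_lt_0_compat; [repeat apply Rmult_lt_0_compat|]; lra. }
  assert (hmw : 0 < m * w) by nra.
  assert (hp : m * w + alpha * (1 - tau) * w / N <=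
    (L + Lg) / (L + Lg - alpha * g) * (m * w + alpha * (1 - tau) * w / N)).
  { apply le_ratio_mul; [lra | | lra].
    assert (0 <= alpha * g) by (apply Rmult_le_pos; lra); lra. }
  lra.
Qed.
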